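(* Fix $s\in\mathbb{N}^+$. If $m$ is sufficiently large (depending on $s$), then for every graph $G$, all positive integers $r_1,\dots,r_s$, every $i\in[s]$ and every homomorphism $\varphi$ from $F_i^{\bullet\bullet}$ (viewed as an ordinary digraph) to $T_G^\bigstar$, there is a single pair $(j,k)$ with $j\in[s]$, $k\in[r_j]$ such that $\varphi(V(F_i^{\bullet\bullet}))\subseteq V(T_{j*k})$.
   Context: All digraphs are finite and loopless; a tournament is a digraph in which every pair of distinct vertices is joined by exactly one arc. A homomorphism from a digraph $F$ to a digraph $H$ is a map $\varphi:V(F)\to V(H)$ with $(\varphi(u),\varphi(v))\in E(H)$ whenever $(u,v)\in E(F)$. Construction of $F_i^{\bullet\bullet}$: fix $s$, a positive integer $m$, and a tournament $F_0$ on vertex set $[m]$ satisfying: (I) every vertex has out-degree and in-degree at most $2m/3$; (II) there are no disjoint $A_1,A_2\subseteq[m]$ with $|A_1|=|A_2|=\lceil\sqrt m\,\rceil$ such that $(a_1,a_2)$ is an arc for all $a_1\in A_1,a_2\in A_2$; (III) for every $S\subseteq[m]$ with $|S|\ge 2m/13-\sqrt m$, $F_0[S]$ contains a directed cycle. Let $k_1,\dots,k_s$ be integers in $(2m/3+2,\,5m/6)$ with $k_i>k_{i+1}+1$. $F_i^{\bullet\bullet}$ is the digraph on $[m]\cup\{z_i,w_i\}$ (roots $z_i,w_i$) whose arcs are the arcs of $F_0$, plus $z_i\to v$, $v\to w_i$ for $1\le v\le k_i$, plus $u\to z_i$, $w_i\to u$ for $k_i<u\le m$. The symmetrization $F_i^{\dagger\bullet\bullet}$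 is obtained from two disjoint copies of $F_i^{\bullet\bullet}$, the ''left'' copy with roots $z^1,w^1$ and the ''right'' copy with roots $z^2,w^2$, by identifying $z^1$ with $w^2$ (root $z_i$) and $w^1$ with $z^2$ (root $w_i$). Construction of $T_G^\bigstar$: let $G$ be a graph on $[n]$ and $r_1,\dots,r_s\in\mathbb{N}^+$. For $i\in[s]$ the tournament $T_i$ is built as follows. (1) $T_0$ is the transitive tournament on $[n]$ with arcs $a\to b$ for $a<b$; $T_0[G]$ is its sub-digraph with arcs $(a,b)$, $a<b$, $ab\in E(G)$. Order the arcs of $T_0[G]$ by $(x,y)\succ(a,b)$ iff $x+y>a+b$, or $x+y=a+b$ and $x>a$. (2) For each arc $e=(a,b)$ of $T_0[G]$ attach a new copy of $F_i^{\dagger\bullet\bullet}$ with root $z_i$ identified with $a$ and root $w_i$ with $b$ (so in the left copy $\overleftarrow{F_i^e}$ the roots $z,w$ are $a,b$, and in the right copy $\overrightarrow{F_i^e}$ they are $b,a$). Let $V_e$ be the $2m$ non-root vertices of this copy and $V_0=\bigcup_e V_e$. (3) Add all arcs $x\to y$ with $x$ a non-root vertex of $\overleftarrow{F_i^e}$ and $y$ a non-root vertex of $\overrightarrow{F_i^e}$. (4) For each arc $e=(a,b)$ of $T_0[G]$ and each $x\in[n]\setminus\{a,b\}$, add arcs $x\to v$ for all $v\in V_e$. (5) For arcs $e_1\succ e_2$ of $T_0[G]$, add all arcs $x\to y$ with $x\in V_{e_1}$, $y\in V_{e_2}$. Then $T_G^\bigstar$ is the tournament formed by disjoint copies $T_{i*k}$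 of $T_i$ for $i\in[s]$, $k\in[r_i]$, with all arcs $u\to v$ for $u\in V(T_{i_1*k_1})$, $v\in V(T_{i_2*k_2})$ whenever $i_1<i_2$, or $i_1=i_2$ and $k_1<k_2$. The base of $T_{i*k}$ is its copy of $T_0$, and $T_{i*k}[G]$ denotes the copy of $T_0[G]$ in it. *)

From mathcomp Require Import all_boot all_order.
Set Implicit Arguments. Unset Strict Implicit. Unset Printing Implicit Defensive.

(* Conventions: the vertex set [m] = {1..m} of F_0 is represented by 'I_m,
   with the ordinal v standing for the vertex v+1.  Likewise [n] = 'I_n and
   [s] = 'I_s, [r_j] = {k | k < r j}.  All index shifts are order-preserving. *)

Definition is_tournament (T : finType) (F : rel T) : Prop :=
  (forall x, ~~ F x x) /\ (forall x y, x != y -> F x y = ~~ F y x).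

(* ceil(sqrt m) = least c with m <= c^2 (such c lies in 0..m). *)
Definition ceil_sqrt (m : nat) : nat := find (fun c => m <= c * c) (iota 0 m.+1).

Definition has_dicycle (T : finType) (F : rel T) (S : {set T}) : Prop :=
  exists c : seq T, [/\ 1 < size c, uniq c, {subset c <= S} & cycle F c].

(* |S| >= 2m/13 - sqrt m, written exactly in nat arithmetic:
   either 2m <= 13|S|, or (2m - 13|S|)^2 <= 169 m. *)
Definition big_enough (m c : nat) : Prop :=
  2 * m <= 13 * c \/ (2 * m - 13 * c) ^ 2 <= 169 * m.

(* Conditions (I), (II), (III) on the tournament F_0 on [m]. *)
Definition F0_cond (m : nat) (F0 : rel 'I_m) : Prop :=
  [/\ is_tournament F0,
      (forall x, 3 * #|[set y | F0 x y]| <= 2 * m /\ 3 * #|[set y | F0 y x]| <= 2 * m),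
      ~ (exists A1 A2 : {set 'I_m},
            [/\ [disjoint A1 & A2], #|A1| = ceil_sqrt m, #|A2| = ceil_sqrt m
              & forall a1 a2, a1 \in A1 -> a2 \in A2 -> F0 a1 a2])
    & forall S : {set 'I_m}, big_enough m #|S| -> has_dicycle F0 S].

Definition k_cond (m s : nat) (kk : 'I_s -> nat) : Prop :=
  (forall i, 2 * m + 6 < 3 * kk i /\ 6 * kk i < 5 * m) /\
  (forall i j : 'I_s, nat_of_ord j = (nat_of_ord i).+1 -> (kk j).+1 < kk i).

(* F_i^{bullet bullet}: vertices inl v (v in [m]), inr false = z_i, inr true = w_i. *)
Definition VF (m : nat) := ('I_m + bool)%type.

Definition Fbb_arc (m : nat) (F0 : rel 'I_m) (k : nat) (x y : VF m) : bool :=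
  match x, y with
  | inl u, inl v => F0 u v
  | inr false, inl v => v < k        (* z -> v, v <= k_i *)
  | inl v, inr false => k <= v       (* u -> z, u > k_i *)
  | inl v, inr true => v < k         (* v -> w, v <= k_i *)
  | inr true, inl v => k <= v        (* w -> u, u > k_i *)
  | inr _, inr _ => false
  end.

Definition Gedge (n : nat) (G : rel 'I_n) :=
  {e : 'I_n * 'I_n | (e.1 < e.2) && G e.1 e.2}.

Definition edge_succ (n : nat) (G : rel 'I_n) (e1 e2 : Gedge G) : bool :=
  let x := nat_of_ord (val e1).1 in let y := nat_of_ord (val e1).2 in
  let a := nat_of_ord (val e2).1 in let b := nat_of_ord (val e2).2 in
  (a + b < x + y) || ((x + y == a + b) && (a < x)).

(* Vertices of T_i: base vertices inl a, and non-root vertices inr (e, c, v) of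
   the copy of F_i^{dagger bullet bullet} attached to e: c = false is the left
   copy (roots z = a, w = b), c = true the right copy (roots z = b, w = a);
   v in [m] is a non-root vertex of that copy. *)
Definition VT (n : nat) (G : rel 'I_n) (m : nat) :=
  ('I_n + (Gedge G * bool * 'I_m))%type.

Definition rootz (n : nat) (G : rel 'I_n) (e : Gedge G) (c : bool) : 'I_n :=
  if c then (val e).2 else (val e).1.
Definition rootw (n : nat) (G : rel 'I_n) (e : Gedge G) (c : bool) : 'I_n :=
  if c then (val e).1 else (val e).2.

Definition Ti_arc (n : nat) (G : rel 'I_n) (m : nat) (F0 : rel 'I_m) (k : nat)
    (x y : VT G m) : bool :=
  match x, y with
  | inl a, inl b => a < b
  | inl a, inr (e, c, v) =>
      if a == rootz e c then v < k else if a == rootw e c then k <= v else true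
  | inr (e, c, v), inl a =>
      if a == rootz e c then k <= v else if a == rootw e c then v < k else false
  | inr (e1, c1, v1), inr (e2, c2, v2) =>
      if e1 == e2 then (if c1 == c2 then F0 v1 v2 else ~~ c1 && c2)
      else edge_succ e1 e2
  end.

Definition Idx (s : nat) (r : 'I_s -> nat) := {p : 'I_s * nat | p.2 < r p.1}.

(* Vertices of T_G^star: (copy index (j,k), vertex of T_{j*k}). *)
Definition VS (s : nat) (r : 'I_s -> nat) (n : nat) (G : rel 'I_n) (m : nat) :=
  (Idx r * VT G m)%type.

Definition Tstar_arc (s : nat) (r : 'I_s -> nat) (n : nat) (G : rel 'I_n)
    (m : nat) (F0 : rel 'I_m) (kk : 'I_s -> nat) (x y : VS r G m) : bool :=
  let i1 := (val x.1).1 in let k1 := (val x.1).2 in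
  let i2 := (val y.1).1 in let k2 := (val y.1).2 in
  (i1 < i2) || ((i1 == i2) && (k1 < k2)) ||
  ((x.1 == y.1) && Ti_arc F0 (kk i1) x.2 y.2).

From mathcomp Require Import all_boot all_order.
From mathcomp Require Import zify.
Set Implicit Arguments. Unset Strict Implicit. Unset Printing Implicit Defensive.
Import Order.TTheory.

(* Order the copies T_{j*k} lexicographically by (j,k): every arc of T_G^* is
   non-decreasing for this order, so the copy index of phi is monotone along the
   arcs of F_i^{bb}.  If it were not constant, the vertices of [m] mapped to the
   lowest copy would form a nonempty proper set A closed under in-arcs of F_0
   (the roots z_i, w_i have in- and out-neighbours in [m]); F_0 being a
   tournament, every arc between A and its complement leaves A.  By (I) both
   sides then have at least m/3 >= ceil(sqrt m) vertices, giving the complete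
   bipartite pattern forbidden by (II). *)

Lemma in_closed_dominates (T : finType) (F : rel T) (A : {set T}) : is_tournament F ->
  (forall x y, F x y -> y \in A -> x \in A) -> {in A & ~: A, forall a b, F a b}.
Proof.
move=> [_ Ftour] Aclosed a b aA; rewrite inE => bNA.
have ab : a != b by apply: contraNneq bNA => <-.
by rewrite Ftour //; apply: contra bNA => /Aclosed; apply.
Qed.

Lemma exists_subset_card (T : finType) (B : {set T}) k : k <= #|B| ->
  exists2 A : {set T}, A \subset B & #|A| = k.
Proof.
rewrite -bin_gt0 -cards_draws => /card_gt0P [A]; rewrite inE => /andP [AB /eqP cA].
by exists A.
Qed.

Lemma ceil_sqrt_le m c : c <= m -> m <= c * c -> ceil_sqrt m <= c.
Proof.
move=> cm mcc; rewrite /ceil_sqrt; case: leqP => // lt_c_find.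
have := before_find 0 lt_c_find; rewrite nth_iota ?add0n ?mcc //; lia.
Qed.

Lemma ceil_sqrt_le_third m : 12 <= m -> ceil_sqrt m <= m %/ 3.
Proof.
move=> m12; have q4 : 4 <= m %/ 3 by lia.
have : 4 * (m %/ 3) <= m %/ 3 * (m %/ 3) by rewrite leq_mul2r q4 orbT.
move=> ?; apply: ceil_sqrt_le; lia.
Qed.

Section DominatingCut.
Variables (m : nat) (F0 : rel 'I_m) (A : {set 'I_m}) (a b : 'I_m).
Hypotheses (aA : a \in A) (bNA : b \notin A).
Hypothesis A_dom : {in A & ~: A, forall x y, F0 x y}.

Lemma dominating_cut_sides :
  (forall x, 3 * #|[set y | F0 x y]| <= 2 * m /\ 3 * #|[set y | F0 y x]| <= 2 * m) ->
  m <= 3 * #|A| /\ m <= 3 * #|~: A|.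
Proof.
move=> Fdeg; have cA := cardsC A; rewrite card_ord in cA.
have outA : #|~: A| <= #|[set y | F0 a y]|.
  by apply/subset_leq_card/subsetP => y yNA; rewrite inE A_dom.
have inA : #|A| <= #|[set y | F0 y b]|.
  by apply/subset_leq_card/subsetP => y yA; rewrite inE A_dom // inE.
have [+ _] := Fdeg a; have [_ +] := Fdeg b; lia.
Qed.

Lemma F0_cond_no_dominating_cut : F0_cond F0 -> 12 <= m -> False.
Proof.
move=> [_ Fdeg noII _] m12; have [A3 NA3] := dominating_cut_sides Fdeg.
have sq := ceil_sqrt_le_third m12.
have [A1 A1A cA1] : exists2 A1 : {set 'I_m}, A1 \subset A & #|A1| = ceil_sqrt m.
  by apply: exists_subset_card; lia.
have [A2 A2NA cA2] : exists2 A2 : {set 'I_m}, A2 \subset ~: A & #|A2| = ceil_sqrt m.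
  by apply: exists_subset_card; lia.
apply: noII; exists A1, A2; split => //.
- by rewrite disjoints_subset (subset_trans A1A) // subsetC.
- by move=> x y /(subsetP A1A) xA /(subsetP A2NA); apply: A_dom.
Qed.

End DominatingCut.

Section MonotoneOnFbb.
Variables (m : nat) (F0 : rel 'I_m) (k : nat).
Hypothesis k_in : 0 < k < m.

Lemma Fbb_in_neighbour (y : VF m) :
  exists u : 'I_m, y = inl u \/ Fbb_arc F0 k (inl u) y.
Proof.
case/andP: k_in => k0 km.
case: y => [u | [|]]; first by exists u; left.
- by exists (Ordinal (ltn_trans k0 km)); right.
- by exists (Ordinal km); right; rewrite /= leqnn.
Qed.

Lemma Fbb_out_neighbour (y : VF m) :
  exists v : 'I_m, y = inl v \/ Fbb_arc F0 k y (inl v).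
Proof.
case/andP: k_in => k0 km.
case: y => [v | [|]]; first by exists v; left.
- by exists (Ordinal km); right; rewrite /= leqnn.
- by exists (Ordinal (ltn_trans k0 km)); right.
Qed.

Lemma Fbb_monotone_const d (T : orderType d) (f : VF m -> T) :
  F0_cond F0 -> 12 <= m ->
  (forall x y, Fbb_arc F0 k x y -> (f x <= f y)%O) -> forall x, f x = f (inr false).
Proof.
move=> F0c m12 f_mono.
have [x0 _ x0_min] := arg_minP f (erefl : predT (inr false : VF m)).
have min_closed x y : Fbb_arc F0 k x y -> f y = f x0 -> f x = f x0.
  by move=> /f_mono fxy fy; apply/le_anti; rewrite x0_min // andbT -fy.
suff min_const x : f x = f x0 by rewrite !min_const.
apply/eqP/negPn/negP => fx_neq.
pose A0 := [set v : 'I_m | f (inl v) == f x0].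
have A0_dom : {in A0 & ~: A0, forall u v, F0 u v}.
  apply: in_closed_dominates; first by case: F0c.
  by move=> u v uv; rewrite !inE => /eqP /(min_closed (inl u) (inl v) uv) ->.
have [a a_in] : exists a, a \in A0.
  have [a [x0a | ax0]] := Fbb_in_neighbour x0; exists a; rewrite inE.
    by rewrite -x0a.
  exact/eqP/(min_closed _ _ ax0).
have [b b_out] : exists b, b \notin A0.
  have [b [xb | xb]] := Fbb_out_neighbour x; exists b; rewrite inE.
    by rewrite -xb.
  by apply: contra fx_neq => /eqP /(min_closed _ _ xb) ->.
exact: (F0_cond_no_dominating_cut a_in b_out A0_dom F0c m12).
Qed.

End MonotoneOnFbb.

Section CopyRank.
Variables (s : nat) (r : 'I_s -> nat) (n : nat) (G : rel 'I_n) (m : nat).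

Definition copy_rank (X : VS r G m) : 'I_s *l nat := val X.1.

Lemma Tstar_arc_rank (F0 : rel 'I_m) (kk : 'I_s -> nat) (X Y : VS r G m) :
  Tstar_arc F0 kk X Y -> (copy_rank X <= copy_rank Y)%O.
Proof.
rewrite /Tstar_arc /copy_rank leEprodlexi !leEord !leEnat.
case/orP => [/orP [lt_i | /andP [/eqP eq_i lt_k]] | /andP [/eqP -> _]].
- by rewrite ltnW // leqNgt lt_i.
- by rewrite eq_i leqnn ltnW.
- by rewrite !leqnn.
Qed.

End CopyRank.

Theorem lemma4p7 (s : nat) : 0 < s ->
  exists M : nat, forall m : nat, M <= m ->
  forall (F0 : rel 'I_m) (kk : 'I_s -> nat), F0_cond F0 -> k_cond m kk ->
  forall (n : nat) (G : rel 'I_n), irreflexive G -> symmetric G ->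
  forall r : 'I_s -> nat, (forall j, 0 < r j) ->
  forall (i : 'I_s) (phi : VF m -> VS r G m),
    (forall x y, Fbb_arc F0 (kk i) x y -> Tstar_arc F0 kk (phi x) (phi y)) ->
    exists p : Idx r, forall x, (phi x).1 = p.
Proof.
move=> _; exists 12 => m m12 F0 kk F0c [kk_bounds _] n G _ _ r _ i phi phi_hom.
have k_in : 0 < kk i < m by have := kk_bounds i; lia.
have rank_const := Fbb_monotone_const (f := fun x => copy_rank (phi x)) k_in F0c m12.
exists (phi (inr false)).1 => x; apply: val_inj.
by apply: rank_const => y z /phi_hom /Tstar_arc_rank.
Qed.
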